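(* Let $\sigma_X>0$, $R_c\ge0$, $P\ge0$. Then $\underline D'(0,R_c,P|\mathcal N(\mu_X,\sigma_X^2))=\sigma_X^2+(\sigma_X-\sqrt P)_+^2$, and for $R>0$, $$\underline D'(R,R_c,P|\mathcal N(\mu_X,\sigma_X^2))=\begin{cases}\sigma_X^2e^{-2R}&\text{if }\frac{\sqrt P}{\sigma_X}\ge(1-\sqrt{1-e^{-2R}})\vee e^{-(R+R_c)},\\[2pt] \sigma_X^2+(\sigma_X-\sqrt P)^2-2\sigma_X(\sigma_X-\sqrt P)\sqrt{1-e^{-2R}}&\text{if }\frac{\sqrt P}{\sigma_X}\in[e^{-(R+R_c)},1-\sqrt{1-e^{-2R}}),\\[2pt] \sigma_X^2e^{-2R}+(\sigma_Xe^{-(R+R_c)}-\sqrt P)^2&\text{if }\frac{\sqrt P}{\sigma_X}\in[\nu(R,R_c),e^{-(R+R_c)}),\\[2pt] \sigma_X^2+(\sigma_X-\sqrt P)^2-2\sigma_X^2\sqrt{1-e^{-2R}}\sqrt{(1-e^{-(R+R_c)})\big(1+e^{-(R+R_c)}-\tfrac{2\sqrt P}{\sigma_X}\big)}&\text{if }\frac{\sqrt P}{\sigma_X}<\nu(R,R_c)\wedge e^{-(R+R_c)},\end{cases}$$ where $\nu(R,R_c):=\frac{e^{-2R}-e^{-2(R+R_c)}}{2-2e^{-(R+R_c)}}$. Moreover, the intervals $[e^{-(R+R_c)},1-\sqrt{1-e^{-2R}})$ and $[\nu(R,R_c),e^{-(R+R_c)})$ are never both non-empty.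
   Context: All logarithms are natural; $(a)_+:=\max\{a,0\}$, $a\vee b:=\max\{a,b\}$, $a\wedge b:=\min\{a,b\}$. For $R,R_c\ge0$, $P\ge 0$, $$\underline D'(R,R_c,P|\mathcal N(\mu_X,\sigma_X^2)):=\min_{\sigma_{\hat X}\in[(\sigma_X-\sqrt P)_+,\sigma_X]}\Big(\sigma_X^2+\sigma_{\hat X}^2-2\sigma_X\sqrt{(1-e^{-2R})\big(\sigma_{\hat X}^2-((\sigma_Xe^{-(R+R_c)}-\sqrt P)_+)^2\big)}\Big).$$ *)

From Stdlib Require Import Reals.
Open Scope R_scope.

Definition pos_part (a : R) : R := Rmax a 0.

Definition IsMinOn (f : R -> R) (a b m : R) : Prop :=
  (exists s, a <= s <= b /\ f s = m) /\
  (forall s, a <= s <= b -> m <= f s).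

(* The objective inside the min defining underline D'(R,Rc,P | N(muX, sX^2)),
   as a function of sigma_hatX. muX does not enter the formula. *)
Definition Dobj (muX sX Rr Rc P : R) (sXh : R) : R :=
  sX ^ 2 + sXh ^ 2
  - 2 * sX * sqrt ((1 - exp (-2 * Rr)) *
                   (sXh ^ 2 - (pos_part (sX * exp (- (Rr + Rc)) - sqrt P)) ^ 2)).

Definition Dlo (sX P : R) : R := pos_part (sX - sqrt P).
Definition Dhi (sX : R) : R := sX.

Definition DlowEq (muX sX Rr Rc P m : R) : Prop :=
  IsMinOn (Dobj muX sX Rr Rc P) (Dlo sX P) (Dhi sX) m.

Definition nu (Rr Rc : R) : R :=
  (exp (-2 * Rr) - exp (-2 * (Rr + Rc))) / (2 - 2 * exp (- (Rr + Rc))).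

(** With [a = σ], [c = 1 - exp (-2R)], [e = exp (-(R + Rc))], [k = (σ e - sqrt P)_+]
    and [v = sqrt (σ̂² - k²)], the objective equals [a² + k² - a² c + (v - a sqrt c)²].
    It is therefore minimised at the stationary point [σ̂² = k² + a² c] when this lies
    in [[(σ - sqrt P)_+, σ]]; otherwise it lies to the left of the interval, where the
    objective is nondecreasing, and the minimum is taken at the left end point.
    With [t = sqrt P / σ], the four cases record whether [k] vanishes ([t ≥ e]) and on
    which side of the left end point the stationary point lies (compare [t] with
    [1 - sqrt c], resp. [ν]); at [t = e] these two comparisons coincide, which keeps
    the two middle intervals from both being non-empty. *)
From Stdlib Require Import Reals Lra Psatz.
Open Scope R_scope.

Lemma pos_part_ge0 (a : R) : 0 <= pos_part a.
Proof. apply Rmax_r. Qed.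

Lemma pos_part_id (a : R) : 0 <= a -> pos_part a = a.
Proof. apply Rmax_left. Qed.

Lemma pos_part_eq0 (a : R) : a <= 0 -> pos_part a = 0.
Proof. apply Rmax_right. Qed.

Lemma pos_part_le (a b : R) : a <= b -> pos_part a <= pos_part b.
Proof.
  intros Hab; apply Rmax_lub; [|apply pos_part_ge0].
  eapply Rle_trans; [exact Hab | apply Rmax_l].
Qed.

Lemma pos_part_le_l (a b : R) : a <= b -> 0 <= b -> pos_part a <= b.
Proof. apply Rmax_lub. Qed.

Lemma exp_neg_mul2 (r : R) : exp (-2 * r) = exp (- r) ^ 2.
Proof. replace (-2 * r) with (- r + - r) by ring; rewrite exp_plus; ring. Qed.

Lemma exp_neg_le1 (r : R) : 0 <= r -> exp (- r) <= 1.
Proof.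
  intros Hr; rewrite <- exp_0.
  destruct (Req_dec r 0) as [->|Hr0]; [rewrite Ropp_0; lra|].
  left; apply exp_increasing; lra.
Qed.

Section Objective.

Variables a k c : R.
Hypotheses (Ha : 0 <= a) (Hk : 0 <= k) (Hc : 0 <= c).

Definition objective (s : R) : R := a ^ 2 + s ^ 2 - 2 * a * sqrt (c * (s ^ 2 - k ^ 2)).

Lemma objective_sqrt_form (s : R) : k <= s ->
  objective s
  = a ^ 2 + k ^ 2 + sqrt (s ^ 2 - k ^ 2) ^ 2 - 2 * a * sqrt c * sqrt (s ^ 2 - k ^ 2).
Proof.
  intros Hks; unfold objective.
  rewrite sqrt_mult_alt, pow2_sqrt by nra; ring.
Qed.

Lemma objective_ge (s : R) : k <= s -> a ^ 2 + k ^ 2 - a ^ 2 * c <= objective s.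
Proof.
  intros Hks; rewrite objective_sqrt_form by exact Hks.
  assert (Hsq : 0 <= (sqrt (s ^ 2 - k ^ 2) - a * sqrt c) ^ 2) by apply pow2_ge_0.
  rewrite <- (pow2_sqrt c) at 1 by exact Hc; nra.
Qed.

Lemma objective_stationary :
  objective (sqrt (k ^ 2 + a ^ 2 * c)) = a ^ 2 + k ^ 2 - a ^ 2 * c.
Proof.
  unfold objective.
  rewrite pow2_sqrt by nra.
  replace (c * (k ^ 2 + a ^ 2 * c - k ^ 2)) with ((a * c) ^ 2) by ring.
  rewrite sqrt_pow2 by nra; ring.
Qed.

(* Writing [v] and [w] for [sqrt (s² - k²)] and [sqrt (L² - k²)], the
   difference of the objectives is [(v - w) (v + w - 2 a sqrt c)]. *)
Lemma objective_mono (L s : R) :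
  k <= L -> L <= s -> k ^ 2 + a ^ 2 * c <= L ^ 2 -> objective L <= objective s.
Proof.
  intros HkL HLs Hstat.
  rewrite !objective_sqrt_form by lra.
  assert (Hwv : sqrt (L ^ 2 - k ^ 2) <= sqrt (s ^ 2 - k ^ 2)) by (apply sqrt_le_1_alt; nra).
  assert (Haw : a * sqrt c <= sqrt (L ^ 2 - k ^ 2)).
  { rewrite <- (sqrt_pow2 (a * sqrt c)) by (apply Rmult_le_pos; [lra | apply sqrt_pos]).
    apply sqrt_le_1_alt; rewrite Rpow_mult_distr, pow2_sqrt by exact Hc; lra. }
  nra.
Qed.

Lemma IsMinOn_objective_stationary (L : R) :
  k <= L -> L ^ 2 <= k ^ 2 + a ^ 2 * c <= a ^ 2 ->
  IsMinOn objective L a (a ^ 2 + k ^ 2 - a ^ 2 * c).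
Proof.
  intros HkL [HL Hu]; split.
  - exists (sqrt (k ^ 2 + a ^ 2 * c)); split; [|apply objective_stationary].
    split.
    + apply Rle_trans with (sqrt (L ^ 2)); [rewrite sqrt_pow2 by lra; lra|].
      apply sqrt_le_1_alt; exact HL.
    + apply Rle_trans with (sqrt (a ^ 2)); [apply sqrt_le_1_alt; exact Hu|].
      rewrite sqrt_pow2 by exact Ha; lra.
  - intros s Hs; apply objective_ge; lra.
Qed.

Lemma IsMinOn_objective_left (L : R) :
  k <= L -> L <= a -> k ^ 2 + a ^ 2 * c <= L ^ 2 ->
  IsMinOn objective L a (objective L).
Proof.
  intros HkL HLa Hstat; split.
  - exists L; split; [lra | reflexivity].
  - intros s Hs; apply objective_mono; lra.
Qed.

End Objective.

Lemma DlowEq_objective (muX sX Rr Rc P m : R) :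
  IsMinOn (objective sX (pos_part (sX * exp (- (Rr + Rc)) - sqrt P)) (1 - exp (-2 * Rr)))
    (pos_part (sX - sqrt P)) sX m ->
  DlowEq muX sX Rr Rc P m.
Proof. exact (fun H => H). Qed.

Lemma IsMinOn_zero_rate (sX y p : R) :
  0 < sX -> y <= 1 -> 0 <= p ->
  IsMinOn (objective sX (pos_part (sX * y - p)) 0) (pos_part (sX - p)) sX
    (sX ^ 2 + pos_part (sX - p) ^ 2).
Proof.
  intros HsX Hy Hp.
  assert (HkL : pos_part (sX * y - p) <= pos_part (sX - p)) by (apply pos_part_le; nra).
  replace (sX ^ 2 + pos_part (sX - p) ^ 2)
    with (objective sX (pos_part (sX * y - p)) 0 (pos_part (sX - p)))
    by (unfold objective; rewrite Rmult_0_l, sqrt_0; ring).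
  apply IsMinOn_objective_left;
    [lra | apply pos_part_ge0 | lra | exact HkL | apply pos_part_le_l; lra |].
  pose proof (pos_part_ge0 (sX * y - p)); nra.
Qed.

Definition nu_of (x e : R) : R := (x ^ 2 - e ^ 2) / (2 - 2 * e).

Lemma nu_exp (Rr Rc : R) : nu Rr Rc = nu_of (exp (- Rr)) (exp (- (Rr + Rc))).
Proof. unfold nu, nu_of; rewrite !exp_neg_mul2; reflexivity. Qed.

(* [ν] is the value of [t] at which the stationary point [k² + a² c]
   reaches the left end point [L²], in units of [σ²]. *)
Lemma nu_of_le_iff (x e t : R) :
  e < 1 -> nu_of x e <= t <-> (1 - t) ^ 2 <= (e - t) ^ 2 + (1 - x ^ 2).
Proof.
  intros He; unfold nu_of.
  assert (Hd : 0 < 2 - 2 * e) by lra.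
  assert (Hnu : (x ^ 2 - e ^ 2) / (2 - 2 * e) * (2 - 2 * e) = x ^ 2 - e ^ 2) by (field; lra).
  split; intros H.
  - apply (Rmult_le_compat_r (2 - 2 * e)) in H; lra.
  - apply (Rmult_le_reg_r (2 - 2 * e)); nra.
Qed.

Lemma nu_of_thresholds_disjoint (x e : R) :
  e < 1 -> x ^ 2 <= 1 -> ~ (e < 1 - sqrt (1 - x ^ 2) /\ nu_of x e < e).
Proof.
  intros He Hx [Hg Hnu].
  assert (Hle : (1 - e) ^ 2 <= (e - e) ^ 2 + (1 - x ^ 2))
    by (apply nu_of_le_iff; lra).
  assert (Hr : sqrt (1 - x ^ 2) ^ 2 = 1 - x ^ 2) by (apply pow2_sqrt; lra).
  assert (Hr0 : 0 <= sqrt (1 - x ^ 2)) by apply sqrt_pos.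
  nra.
Qed.

Section PositiveRate.

Variables sX x e p : R.
Hypotheses (HsX : 0 < sX) (Hx1 : x < 1) (He0 : 0 < e) (Hex : e <= x) (Hp : 0 <= p).

Local Notation k := (pos_part (sX * e - p)).
Local Notation L := (pos_part (sX - p)).
Local Notation r := (sqrt (1 - x ^ 2)).

Lemma k_le_L : k <= L.
Proof. apply pos_part_le; nra. Qed.

Lemma L_le_sX : L <= sX.
Proof. apply pos_part_le_l; lra. Qed.

Lemma pow2_sqrt_1_sub_sqr : r ^ 2 = 1 - x ^ 2.
Proof. apply pow2_sqrt; nra. Qed.

Lemma IsMinOn_stationary_k0 :
  Rmax (1 - r) e <= p / sX ->
  IsMinOn (objective sX k (1 - x ^ 2)) L sX (sX ^ 2 * x ^ 2).
Proof.
  intros Ht; set (t := p / sX) in *.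
  assert (Hpt : p = t * sX) by (unfold t; field; lra).
  assert (Hg : 1 - r <= t) by (eapply Rle_trans; [apply Rmax_l | exact Ht]).
  assert (Het : e <= t) by (eapply Rle_trans; [apply Rmax_r | exact Ht]).
  assert (Hk0 : k = 0) by (apply pos_part_eq0; nra).
  assert (HLr : L <= sX * r).
  { apply pos_part_le_l; [nra|].
    apply Rmult_le_pos; [lra | apply sqrt_pos]. }
  assert (HL0 : 0 <= L) by apply pos_part_ge0.
  assert (Hr := pow2_sqrt_1_sub_sqr).
  replace (sX ^ 2 * x ^ 2) with (sX ^ 2 + k ^ 2 - sX ^ 2 * (1 - x ^ 2)) by (rewrite Hk0; ring).
  apply IsMinOn_objective_stationary; [lra | apply pos_part_ge0 | nra | apply k_le_L |].
  rewrite Hk0; split; nra.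
Qed.

Lemma IsMinOn_left_k0 :
  e <= p / sX < 1 - r ->
  IsMinOn (objective sX k (1 - x ^ 2)) L sX
    (sX ^ 2 + (sX - p) ^ 2 - 2 * sX * (sX - p) * r).
Proof.
  intros [Het Htg]; set (t := p / sX) in *.
  assert (Hpt : p = t * sX) by (unfold t; field; lra).
  assert (Hr0 : 0 <= r) by apply sqrt_pos.
  assert (Hr := pow2_sqrt_1_sub_sqr).
  assert (Hk0 : k = 0) by (apply pos_part_eq0; nra).
  assert (HL : L = sX - p) by (apply pos_part_id; nra).
  assert (HLr : sX * r <= sX - p) by nra.
  replace (sX ^ 2 + (sX - p) ^ 2 - 2 * sX * (sX - p) * r) with (objective sX k (1 - x ^ 2) L).
  2:{ unfold objective; rewrite Hk0, HL.
      replace ((1 - x ^ 2) * ((sX - p) ^ 2 - 0 ^ 2)) with ((sX - p) ^ 2 * (1 - x ^ 2)) by ring.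
      rewrite sqrt_mult_alt by apply pow2_ge_0.
      rewrite sqrt_pow2 by nra; ring. }
  apply IsMinOn_objective_left;
    [lra | apply pos_part_ge0 | nra | apply k_le_L | apply L_le_sX |].
  rewrite Hk0, HL, <- Hr.
  replace (0 ^ 2 + sX ^ 2 * r ^ 2) with ((sX * r) ^ 2) by ring.
  apply pow_incr; nra.
Qed.

Lemma IsMinOn_stationary_kpos :
  nu_of x e <= p / sX < e ->
  IsMinOn (objective sX k (1 - x ^ 2)) L sX (sX ^ 2 * x ^ 2 + (sX * e - p) ^ 2).
Proof.
  intros [Hnu Hte]; set (t := p / sX) in *.
  assert (Hpt : p = t * sX) by (unfold t; field; lra).
  apply nu_of_le_iff in Hnu; [|lra].
  assert (Hk : k = sX * e - p) by (apply pos_part_id; nra).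
  assert (HL : L = sX - p) by (apply pos_part_id; nra).
  replace (sX ^ 2 * x ^ 2 + (sX * e - p) ^ 2)
    with (sX ^ 2 + k ^ 2 - sX ^ 2 * (1 - x ^ 2)) by (rewrite Hk; ring).
  apply IsMinOn_objective_stationary; [lra | apply pos_part_ge0 | nra | apply k_le_L |].
  rewrite Hk, HL, Hpt; split.
  - apply (Rmult_le_compat_l (sX ^ 2)) in Hnu; [nra | apply pow2_ge_0].
  - assert (Hsq : (e - t) ^ 2 <= x ^ 2) by (apply pow_incr; nra); nra.
Qed.

Lemma IsMinOn_left_kpos :
  p / sX < Rmin (nu_of x e) e ->
  IsMinOn (objective sX k (1 - x ^ 2)) L sX
    (sX ^ 2 + (sX - p) ^ 2 - 2 * sX ^ 2 * r * sqrt ((1 - e) * (1 + e - 2 * p / sX))).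
Proof.
  intros Ht; set (t := p / sX) in *.
  assert (Hpt : p = t * sX) by (unfold t; field; lra).
  assert (Hnu : t < nu_of x e) by (eapply Rlt_le_trans; [exact Ht | apply Rmin_l]).
  assert (Hte : t < e) by (eapply Rlt_le_trans; [exact Ht | apply Rmin_r]).
  assert (Hstat : (e - t) ^ 2 + (1 - x ^ 2) <= (1 - t) ^ 2).
  { destruct (Rle_lt_dec ((1 - t) ^ 2) ((e - t) ^ 2 + (1 - x ^ 2))) as [H|H]; [|lra].
    apply nu_of_le_iff in H; lra. }
  assert (Hk : k = sX * e - p) by (apply pos_part_id; nra).
  assert (HL : L = sX - p) by (apply pos_part_id; nra).
  replace (sX ^ 2 + (sX - p) ^ 2 - 2 * sX ^ 2 * r * sqrt ((1 - e) * (1 + e - 2 * p / sX)))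
    with (objective sX k (1 - x ^ 2) L).
  2:{ unfold objective; rewrite Hk, HL.
      replace ((1 - x ^ 2) * ((sX - p) ^ 2 - (sX * e - p) ^ 2))
        with ((sX * r) ^ 2 * ((1 - e) * (1 + e - 2 * p / sX)))
        by (rewrite Rpow_mult_distr, pow2_sqrt_1_sub_sqr; field; lra).
      rewrite sqrt_mult_alt by apply pow2_ge_0.
      rewrite sqrt_pow2 by (apply Rmult_le_pos; [lra | apply sqrt_pos]); ring. }
  apply IsMinOn_objective_left;
    [lra | apply pos_part_ge0 | nra | apply k_le_L | apply L_le_sX |].
  rewrite Hk, HL, Hpt.
  apply (Rmult_le_compat_l (sX ^ 2)) in Hstat; [nra | apply pow2_ge_0].
Qed.

End PositiveRate.

Theorem mainTheorem8 (muX sX Rc P : R) (hsX : 0 < sX) (hRc : 0 <= Rc) (hP : 0 <= P) :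
  DlowEq muX sX 0 Rc P (sX ^ 2 + (pos_part (sX - sqrt P)) ^ 2) /\
  (forall Rr : R, 0 < Rr ->
     let t := sqrt P / sX in
     let e := exp (- (Rr + Rc)) in
     let g := 1 - sqrt (1 - exp (-2 * Rr)) in
     (Rmax g e <= t ->
        DlowEq muX sX Rr Rc P (sX ^ 2 * exp (-2 * Rr))) /\
     (e <= t < g ->
        DlowEq muX sX Rr Rc P
          (sX ^ 2 + (sX - sqrt P) ^ 2
           - 2 * sX * (sX - sqrt P) * sqrt (1 - exp (-2 * Rr)))) /\
     (nu Rr Rc <= t < e ->
        DlowEq muX sX Rr Rc P
          (sX ^ 2 * exp (-2 * Rr) + (sX * e - sqrt P) ^ 2)) /\
     (t < Rmin (nu Rr Rc) e ->
        DlowEq muX sX Rr Rc P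
          (sX ^ 2 + (sX - sqrt P) ^ 2
           - 2 * sX ^ 2 * sqrt (1 - exp (-2 * Rr))
             * sqrt ((1 - e) * (1 + e - 2 * sqrt P / sX)))) /\
     ~ (e < g /\ nu Rr Rc < e)).
Proof.
  assert (Hp : 0 <= sqrt P) by apply sqrt_pos.
  split.
  - apply DlowEq_objective.
    rewrite Rmult_0_r, exp_0, Rminus_diag, Rplus_0_l.
    apply IsMinOn_zero_rate; [exact hsX | apply exp_neg_le1, hRc | exact Hp].
  - intros Rr HRr; cbv zeta.
    rewrite nu_exp, exp_neg_mul2.
    assert (Hx1 : exp (- Rr) < 1) by (rewrite <- exp_0; apply exp_increasing; lra).
    assert (He0 : 0 < exp (- (Rr + Rc))) by apply exp_pos.
    assert (Hex : exp (- (Rr + Rc)) <= exp (- Rr)).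
    { rewrite Ropp_plus_distr, exp_plus.
      pose proof (exp_pos (- Rr)); pose proof (exp_neg_le1 Rc hRc); nra. }
    split; [|split; [|split; [|split]]]; intros Hcase;
      try (apply DlowEq_objective; rewrite exp_neg_mul2).
    + apply IsMinOn_stationary_k0; assumption.
    + apply IsMinOn_left_k0; assumption.
    + apply IsMinOn_stationary_kpos; assumption.
    + apply IsMinOn_left_kpos; assumption.
    + revert Hcase; apply nu_of_thresholds_disjoint; [lra |].
      pose proof (exp_pos (- Rr)); nra.
Qed.
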